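(* Assume (H3): for all $m$ and all $(x,v)\in X^m\times Y^m$, if $I(x)\cap\mathrm{supp}_{\iota_X(n)}(w)\neq\emptyset$ for some $n$, then for all $k=n,\dots,m$, $\mathrm{proj}_{m\to k}(\Phi^{(m)}(x,v))=\Phi^{(k)}(\mathrm{proj}_{m\to k}(x,v))$. Then for all $n\in\mathbb{N}$, the involution $\Phi^{(n)}$ maps $\mathbb{S}^{\mathrm{valid}}_n$ into $\mathbb{S}^{\mathrm{valid}}_n$; i.e. if $(x,v)\in\mathbb{S}^{\mathrm{valid}}_n$ then $\Phi^{(n)}(x,v)\in\mathbb{S}^{\mathrm{valid}}_n$.
   Context: $\mathbb{2}=\{\mathsf{T},\mathsf{F}\}$, $\Omega=\mathbb{R}\cup\mathbb{2}$, trace space $\mathbb{T}=\bigcup_{n\ge0}\Omega^n$; $w:\mathbb{T}\to[0,\infty)$ is a measurable tree representable function (prefix property: if $t\in\mathrm{supp}_n(w)$ then no proper prefix of $t$ is in $\mathrm{supp}(w)$; type property: if $t\in\mathrm{supp}_n(w)$, $k<n$ and $s\in\Omega$ lies in the other of $\mathbb{R},\mathbb{2}$ than $t_{k+1}$, then $t^{1\dots k}++[s]\notin\mathrm{supp}(w)$), where $\mathrm{supp}(w)=\{t\mid w(t)>0\}$ and $\mathrm{supp}_m(w)=\mathrm{supp}(w)\cap\Omega^m$. Entropy space $\mathbb{E}=\mathbb{R}\times\mathbb{2}$. A trace $t$ is an instance of $x\in\mathbb{E}^m$ if $|t|\le m$ and $t_i\in\{r_i,a_i\}$ for $i\le|t|$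 where $x_i=(r_i,a_i)$; $I(x)$ is the set of instances. Fix strictly monotone $\iota_X,\iota_Y:\mathbb{N}\to\mathbb{N}$, $X^n=\mathbb{E}^{\iota_X(n)}$, $Y^n=\mathbb{E}^{\iota_Y(n)}$; every trace in $\mathrm{supp}(w)$ has length $\iota_X(k)$ for some $k$. For $k\le n$, $\mathrm{proj}_{n\to k}(x,v)=(x^{1\dots\iota_X(k)},v^{1\dots\iota_Y(k)})$. For each $n$, $\Phi^{(n)}$ is an involution of $X^n\times Y^n$. The set of valid states is defined by recursion on $n$: an $n$-dimensional state $(x,v)\in X^n\times Y^n$ is valid, written $(x,v)\in\mathbb{S}^{\mathrm{valid}}_n$, if (i) $I(x)\cap\mathrm{supp}(w)\neq\emptyset$; (ii) writing $(y,u)=\Phi^{(n)}(x,v)$, $I(y)\cap\mathrm{supp}(w)\neq\emptyset$; and (iii) $\mathrm{proj}_{n\to k}(x,v)\notin\mathbb{S}^{\mathrm{valid}}_k$ for all $k<n$. *)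

From Stdlib Require Import Reals.
From mathcomp Require Import all_boot.
Set Implicit Arguments. Unset Strict Implicit. Unset Printing Implicit Defensive.

Definition Omega := (R + bool)%type.
Definition trace := seq Omega.
(* Entropy space E = R × 2; an element of E^m is a sequence of length m. *)
Definition Ent := (R * bool)%type.
Definition state := (seq Ent * seq Ent)%type.

Definition omega0 : Omega := inr true.
Definition ent0 : Ent := (R0, true).

Definition in_supp (w : trace -> R) (t : trace) : Prop := Rlt R0 (w t).

Definition prefix_property (w : trace -> R) : Prop :=
  forall t, in_supp w t -> forall k, k < size t -> ~ in_supp w (take k t).

Definition same_kind (a b : Omega) : bool := is_inl a == is_inl b.

Definition type_property (w : trace -> R) : Prop :=
  forall t, in_supp w t -> forall k, k < size t ->
  forall s : Omega, ~~ same_kind s (nth omega0 t k) ->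
  ~ in_supp w (take k t ++ [:: s]).

Definition instance (t : trace) (x : seq Ent) : Prop :=
  size t <= size x /\
  forall i, i < size t ->
    nth omega0 t i = inl (nth ent0 x i).1 \/ nth omega0 t i = inr (nth ent0 x i).2.

Definition meets_supp (w : trace -> R) (x : seq Ent) : Prop :=
  exists t, instance t x /\ in_supp w t.

Definition proj (iX iY : nat -> nat) (k : nat) (s : state) : state :=
  (take (iX k) s.1, take (iY k) s.2).

Definition in_XY (iX iY : nat -> nat) (n : nat) (s : state) : Prop :=
  size s.1 = iX n /\ size s.2 = iY n.

(* conditions (i), (ii) of validity, together with (x,v) ∈ X^n × Y^n *)
Definition valid_base (iX iY : nat -> nat) (w : trace -> R)
  (Phi : nat -> state -> state) (n : nat) (s : state) : Prop :=
  in_XY iX iY n s /\ meets_supp w s.1 /\ meets_supp w (Phi n s).1.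

(* Recursive definition of valid states, via a fuel argument:
   valid_aux f n s is the correct recursive predicate whenever f > n. *)
Fixpoint valid_aux (iX iY : nat -> nat) (w : trace -> R)
  (Phi : nat -> state -> state) (fuel n : nat) (s : state) : Prop :=
  match fuel with
  | 0 => False
  | fuel'.+1 =>
      valid_base iX iY w Phi n s /\
      forall k, k < n -> ~ valid_aux iX iY w Phi fuel' k (proj iX iY k s)
  end.

Definition valid (iX iY : nat -> nat) (w : trace -> R)
  (Phi : nat -> state -> state) (n : nat) (s : state) : Prop :=
  valid_aux iX iY w Phi n.+1 n s.

(* Sanity: the fuel is irrelevant once it exceeds n, so [valid] satisfies the
   defining recursive equation. *)
Lemma valid_aux_fuel iX iY w Phi f : forall g n s,
  n < f -> n < g -> valid_aux iX iY w Phi f n s <-> valid_aux iX iY w Phi g n s.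
Proof.
elim: f => [|f IH] [|g] n s //= Hf Hg.
split=> -[B H]; split=> // k Hk V; apply: (H k Hk).
- by apply/(IH g k _ (leq_trans Hk Hf) (leq_trans Hk Hg)).
- by apply/(IH g k _ (leq_trans Hk Hf) (leq_trans Hk Hg)).
Qed.

Lemma valid_eq iX iY w Phi n s :
  valid iX iY w Phi n s <->
  valid_base iX iY w Phi n s /\
  forall k, k < n -> ~ valid iX iY w Phi k (proj iX iY k s).
Proof.
split=> -[B H]; split=> // k Hk V; apply: (H k Hk); move: V; rewrite /valid -/valid_aux => V.
- exact (proj1 (@valid_aux_fuel iX iY w Phi (k.+1) n k _ (ltnSn k) Hk) V).
- exact (proj1 (@valid_aux_fuel iX iY w Phi n k.+1 k _ Hk (ltnSn k)) V).
Qed.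

(* Conditions (i) and (ii) of validity are symmetric under the involution, so
   only (iii) needs an argument. Suppose the projection p of Phi(x,v) to a level
   k < n were valid. The support trace witnessing (i) for p lives at a level
   j <= k, so (H3) applies and gives proj_k(x,v) = Phi_k(p). Since the proper
   projections of Phi_k(p) are those of (x,v), which are invalid, Phi_k(p) is
   valid, contradicting (iii) for (x,v). *)
From Stdlib Require Import Reals.
From mathcomp Require Import all_boot.

Set Implicit Arguments. Unset Strict Implicit. Unset Printing Implicit Defensive.

Lemma instance_take t (y : seq Ent) m : instance t (take m y) -> instance t y.
Proof.
move=> [t_size t_nth]; have take_le := size_take_min m y.
split=> [|i lt_it]; first by rewrite (leq_trans t_size) // take_le geq_minr.
have lt_im : i < m by rewrite (leq_trans lt_it) // (leq_trans t_size) // take_le geq_minl.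
by have := t_nth i lt_it; rewrite !(nth_take _ lt_im).
Qed.

Section ValidPhi.

Variables (w : trace -> R) (iX iY : nat -> nat) (Phi : nat -> state -> state).

Hypothesis iX_mono : {homo iX : a b / a < b}.
Hypothesis iY_mono : {homo iY : a b / a < b}.
Hypothesis supp_len : forall t, in_supp w t -> exists k, size t = iX k.
Hypothesis Phi_maps : forall n s, in_XY iX iY n s -> in_XY iX iY n (Phi n s).
Hypothesis Phi_invol : forall n s, in_XY iX iY n s -> Phi n (Phi n s) = s.
Hypothesis proj_Phi : forall m x v, in_XY iX iY m (x, v) ->
  forall n, (exists t, instance t x /\ in_supp w t /\ size t = iX n) ->
  forall k, n <= k <= m -> proj iX iY k (Phi m (x, v)) = Phi k (proj iX iY k (x, v)).

Lemma proj_proj k' k s : k' <= k -> proj iX iY k' (proj iX iY k s) = proj iX iY k' s.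
Proof.
by move=> le_k'k; rewrite /proj /= !take_takel ?(leq_mono iX_mono) ?(leq_mono iY_mono).
Qed.

Lemma meets_supp_take k x : meets_supp w (take (iX k) x) ->
  exists2 j, j <= k & exists t, instance t x /\ in_supp w t /\ size t = iX j.
Proof.
move=> [t [t_inst t_supp]]; have [j size_t] := supp_len t_supp.
exists j; last by exists t; split; first exact: instance_take t_inst.
rewrite -(leq_mono iX_mono) -size_t (leq_trans t_inst.1) //.
by rewrite size_take_min geq_minl.
Qed.

Lemma valid_base_Phi n s : valid_base iX iY w Phi n s -> valid_base iX iY w Phi n (Phi n s).
Proof. by move=> [XY [meets_x meets_y]]; split; [exact: Phi_maps | rewrite Phi_invol]. Qed.

Lemma proj_Phi_swap n k s : in_XY iX iY n s -> k <= n ->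
  meets_supp w (proj iX iY k (Phi n s)).1 -> proj iX iY k s = Phi k (proj iX iY k (Phi n s)).
Proof.
move=> XY le_kn /meets_supp_take [j le_jk short_trace].
rewrite -{1}(Phi_invol XY); move: (Phi_maps XY) short_trace.
case: (Phi n s) => y u XY' /= short_trace.
by apply: (proj_Phi XY' short_trace); rewrite le_jk.
Qed.

Lemma valid_Phi n s : valid iX iY w Phi n s -> valid iX iY w Phi n (Phi n s).
Proof.
move=> /valid_eq [[XY meets] invalid_proj]; apply/valid_eq.
split=> [|k lt_kn /valid_eq [base_p _]].
  exact: valid_base_Phi (conj XY meets).
have swap := proj_Phi_swap XY (ltnW lt_kn) base_p.2.1.
apply: (invalid_proj k lt_kn); apply/valid_eq; split.
  by rewrite swap; apply: valid_base_Phi base_p.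
move=> k' lt_k'k; rewrite proj_proj; last exact: ltnW.
exact: invalid_proj (ltn_trans lt_k'k lt_kn).
Qed.

End ValidPhi.

Theorem propositionB6
  (w : trace -> R) (iX iY : nat -> nat) (Phi : nat -> state -> state)
  (* w is nonnegative and tree representable *)
  (w_ge0 : forall t, Rle R0 (w t))
  (w_prefix : prefix_property w)
  (w_type : type_property w)
  (* iota_X, iota_Y strictly monotone *)
  (iX_mono : forall a b, a < b -> iX a < iX b)
  (iY_mono : forall a b, a < b -> iY a < iY b)
  (* every trace in supp(w) has length iota_X(k) for some k *)
  (supp_len : forall t, in_supp w t -> exists k, size t = iX k)
  (* each Phi^(n) is an involution of X^n × Y^n *)
  (Phi_maps : forall n s, in_XY iX iY n s -> in_XY iX iY n (Phi n s))
  (Phi_invol : forall n s, in_XY iX iY n s -> Phi n (Phi n s) = s)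
  (* (H3) *)
  (H3 : forall m x v, in_XY iX iY m (x, v) ->
     forall n, (exists t, instance t x /\ in_supp w t /\ size t = iX n) ->
     forall k, n <= k <= m ->
       proj iX iY k (Phi m (x, v)) = Phi k (proj iX iY k (x, v))) :
  forall n x v, valid iX iY w Phi n (x, v) -> valid iX iY w Phi n (Phi n (x, v)).
Proof.
move=> n x v; exact: (valid_Phi iX_mono iY_mono supp_len Phi_maps Phi_invol H3).
Qed.
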